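(* For each integer $r\ge 1$, let $G_r=(r+1)K_2 \nabla (r+1)K_2$, of order $4r+4$. Then $LE(G_r)=LE(K_{4r+4})=8r+6$ (so $G_r$ is $L$-borderenergetic), and $G_r$ and $K_{4r+4}$ have different Laplacian spectra.
   Context: All graphs are finite, simple and undirected. The Laplacian matrix of $G$ is $L(G)=D-A$ ($D$ degree matrix, $A$ adjacency matrix). For a graph $G$ on $n$ vertices with Laplacian eigenvalues $\mu_1,\dots,\mu_n$ and average degree $\overline d = 2|E(G)|/n$, the Laplacian energy is $LE(G)=\sum_{i=1}^n|\mu_i-\overline d|$. One has $LE(K_n)=2n-2$. A graph $G$ on $n$ vertices is $L$-borderenergetic if $LE(G)=LE(K_n)$. $K_m$ is the complete graph on $m$ vertices, $mG$ is the disjoint union of $m$ copies of $G$, and the join $G_1\nabla G_2$ is obtained from the disjoint union of $G_1$ and $G_2$ by adding all edges between a vertex of $G_1$ and a vertex of $G_2$. *)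

From HB Require Import structures.
From mathcomp Require Import all_boot all_order all_algebra all_field.
Set Implicit Arguments. Unset Strict Implicit. Unset Printing Implicit Defensive.
Import Order.TTheory GRing.Theory Num.Theory.
Local Open Scope ring_scope.

Definition simple_graph n (e : rel 'I_n) : Prop :=
  (forall i, ~~ e i i) /\ (forall i j, e i j = e j i).

Definition deg n (e : rel 'I_n) (i : 'I_n) : nat := #|[pred k | e i k]|.

Definition laplacian n (e : rel 'I_n) : 'M[algC]_n :=
  \matrix_(i, j) ((if i == j then (deg e i)%:R else 0) - (e i j)%:R).

(* Laplacian spectrum: the multiset (as a seq, order irrelevant) of roots of
   the characteristic polynomial of L, counted with multiplicity. *)
Definition lspec n (e : rel 'I_n) : seq algC :=
  sval (closed_field_poly_normal (char_poly (laplacian e))).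

Definition nedges n (e : rel 'I_n) : nat := #|[set p : 'I_n * 'I_n | e p.1 p.2 && (p.1 < p.2)%N]|.
Definition avgdeg n (e : rel 'I_n) : algC := (2 * nedges e)%:R / n%:R.

Definition LE n (e : rel 'I_n) : algC := \sum_(mu <- lspec e) `|mu - avgdeg e|.

Definition complete n : rel 'I_n := fun i j => i != j.

(* m K_2 on vertices 'I_(2*m): copy k is {2k, 2k+1} *)
Definition mK2 (m : nat) : rel 'I_(2 * m)%N := fun i j => (i != j) && (i./2 == j./2)%N.

Arguments mK2 : clear implicits.

(* join G1 \nabla G2 on 'I_(m+n): first m vertices carry G1, last n carry G2 *)
Definition gjoin m n (e1 : rel 'I_m) (e2 : rel 'I_n) : rel 'I_(m + n) :=
  fun i j => match split i, split j with
             | inl a, inl b => e1 a b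
             | inr a, inr b => e2 a b
             | _, _ => true
             end.

Definition Gr (r : nat) : rel 'I_(2 * r.+1 + 2 * r.+1)%N := gjoin (mK2 r.+1) (mK2 r.+1).
Arguments Gr : clear implicits.
Arguments complete : clear implicits.

(* Let N = 2(r+1) and n = 2N. With J the all-ones matrix, B the indicator of
   "same side of the join" and P the permutation matrix of the perfect matching
   inside each side, L(G_r) = (N+1)I - (J - B + P).  The matrices J, B, P
   commute, so one unitary matrix triangularizes all of them, and the diagonal
   entries (j, b, p) of the triangular forms satisfy j^2 = 2Nj, b^2 = Nb,
   p^2 = 1, jb = Nj, pj = j, pb = b.  On the few solutions of this system the
   quantity |mu - dbar| = |b - j - p| is affine in j and b, so LE(G_r) only
   depends on the traces of J and B: LE = n + tr J / N + (N - 2) tr B / N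
   = 4N - 2.  The same argument for L(K_n) = nI - J gives 2n - 2.  The spectra
   differ because their sums, the traces n(N+1) and n(n-1), differ for N > 2. *)

From HB Require Import structures.
From mathcomp Require Import all_boot all_order all_algebra all_field.
From mathcomp Require Import ring zify.
Import Order.TTheory GRing.Theory Num.Theory.
Local Open Scope ring_scope.

Section ConjugateTriangular.
Variables (F : fieldType) (n : nat).
Implicit Types (A B V : 'M[F]_n) (a : F).

Lemma conjmxD V A B : conjmx V (A + B) = conjmx V A + conjmx V B.
Proof. by rewrite /conjmx mulmxDr mulmxDl. Qed.

Lemma conjmxB V A B : conjmx V (A - B) = conjmx V A - conjmx V B.
Proof. by rewrite /conjmx mulmxBr mulmxBl. Qed.

Lemma conjmxZ V a A : conjmx V (a *: A) = a *: conjmx V A.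
Proof. by rewrite /conjmx -scalemxAr -scalemxAl. Qed.

Lemma conjumxM V A B : V \in unitmx ->
  conjmx V (A *m B) = conjmx V A *m conjmx V B.
Proof. by move=> Vu; rewrite conjmxM ?inE ?stablemx_unit. Qed.

Lemma mxtrace_conjumx V A : V \in unitmx -> \tr (conjmx V A) = \tr A.
Proof. by move=> Vu; rewrite conjumx // mxtrace_mulC mulmxA mulVmx // mul1mx. Qed.

Lemma char_poly_conjumx V A : V \in unitmx -> char_poly (conjmx V A) = char_poly A.
Proof.
move=> Vu; rewrite conjumx // /char_poly /char_poly_mx.
have VV : map_mx polyC V *m map_mx polyC (invmx V) = 1%:M :> 'M[{poly F}]_n.
  by rewrite -map_mxM mulmxV // map_mx1.
have -> : 'X%:M - map_mx polyC (V *m A *m invmx V) =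
   map_mx polyC V *m ('X%:M - map_mx polyC A) *m map_mx polyC (invmx V).
  by rewrite !map_mxM mulmxBr mulmxBl mul_mx_scalar -scalemxAl VV scalemx1.
rewrite !det_mulmx !det_map_mx mulrC mulrA -rmorphM -det_mulmx mulVmx //.
by rewrite det1 rmorph1 mul1r.
Qed.

Lemma is_trig_mxD A B : is_trig_mx A -> is_trig_mx B -> is_trig_mx (A + B).
Proof.
move=> /is_trig_mxP tA /is_trig_mxP tB; apply/is_trig_mxP => i j lt_ij.
by rewrite mxE tA ?tB ?addr0.
Qed.

Lemma is_trig_mxN A : is_trig_mx A -> is_trig_mx (- A).
Proof.
by move=> /is_trig_mxP tA; apply/is_trig_mxP => i j lt_ij; rewrite mxE tA ?oppr0.
Qed.

Lemma is_trig_scalar_mx a : is_trig_mx (a%:M : 'M[F]_n).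
Proof. exact/is_diag_mx_is_trig/scalar_mx_is_diag. Qed.

Lemma mulmx_trig_diag A B i : is_trig_mx A -> is_trig_mx B ->
  (A *m B) i i = A i i * B i i.
Proof.
move=> /is_trig_mxP tA /is_trig_mxP tB; rewrite mxE (bigD1 i) //= big1 ?addr0 //.
move=> k /negbTE nki; case: (ltngtP i k) => [lt_ik|lt_ki|/val_inj eq_ik].
- by rewrite tA // mul0r.
- by rewrite tB // mulr0.
- by rewrite eq_ik eqxx in nki.
Qed.

Lemma conjumxM_diag V A B i : V \in unitmx ->
  is_trig_mx (conjmx V A) -> is_trig_mx (conjmx V B) ->
  conjmx V (A *m B) i i = conjmx V A i i * conjmx V B i i.
Proof. by move=> Vu tA tB; rewrite conjumxM // mulmx_trig_diag. Qed.

End ConjugateTriangular.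

Section LaplacianSpectrum.
Context {n : nat} {e : rel 'I_n}.

Lemma lspec_trig {V : 'M[algC]_n} : V \in unitmx ->
  is_trig_mx (conjmx V (laplacian e)) ->
  perm_eq (lspec e) [seq conjmx V (laplacian e) i i | i <- enum 'I_n].
Proof.
move=> Vu tL; rewrite /lspec; case: closed_field_poly_normal => s /= Hs.
apply: prod_XsubC_eq; rewrite big_map big_enum /=.
rewrite -char_poly_trig // char_poly_conjumx // [RHS]Hs.
by rewrite (monicP (char_poly_monic _)) scale1r.
Qed.

Lemma LE_trig {V : 'M[algC]_n} : V \in unitmx ->
  is_trig_mx (conjmx V (laplacian e)) ->
  LE e = \sum_i `|conjmx V (laplacian e) i i - avgdeg e|.
Proof.
by move=> Vu tL; rewrite /LE (perm_big _ (lspec_trig Vu tL)) big_map big_enum.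
Qed.

Lemma sum_lspec : (0 < n)%N -> \sum_(mu <- lspec e) mu = \tr (laplacian e).
Proof.
move=> n_gt0; have [V /unitarymx_unit Vu tL] := Schur (laplacian e) n_gt0.
rewrite (perm_big _ (lspec_trig Vu tL)) big_map big_enum.
exact: mxtrace_conjumx.
Qed.

Hypothesis e_simple : simple_graph e.

Lemma mxtrace_laplacian : \tr (laplacian e) = \sum_i (deg e i)%:R.
Proof.
case: e_simple => irr _; apply: eq_bigr => i _.
by rewrite mxE eqxx (negbTE (irr i)) subr0.
Qed.

Lemma handshake : (2 * nedges e = \sum_i deg e i)%N.
Proof.
case: e_simple => irr sym.
have deg_sum i : deg e i = (\sum_j e i j)%N.
  by rewrite /deg -sum1_card big_mkcond; apply: eq_bigr => j _; rewrite inE; case: (e i j).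
have nedges_sum : nedges e = (\sum_i \sum_j (e i j && (i < j)%N))%N.
  rewrite /nedges -sum1_card pair_big big_mkcond /=.
  by apply: eq_bigr => -[i j] _; rewrite inE; case: (_ && _).
have split_edge i j : (e i j = (e i j && (i < j)%N) + (e j i && (j < i)%N) :> nat)%N.
  rewrite (sym j i); case: (boolP (e i j)) => //= eij.
  by case: ltngtP => // /val_inj eq_ij; move: (irr i); rewrite {2}eq_ij eij.
rewrite nedges_sum (eq_bigr _ (fun i _ => deg_sum i)).
under [RHS]eq_bigr do under eq_bigr do rewrite split_edge.
under [RHS]eq_bigr do rewrite big_split.
by rewrite big_split /= [X in (_ + X)%N]exchange_big mul2n addnn.
Qed.

Lemma avgdeg_regular {d : nat} : (0 < n)%N -> (forall i, deg e i = d) ->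
  avgdeg e = d%:R.
Proof.
move=> n_gt0 e_reg; rewrite /avgdeg handshake.
under eq_bigr do rewrite e_reg.
by rewrite sum_nat_const card_ord natrM mulrC mulKf // pnatr_eq0 -lt0n.
Qed.

Lemma sum_lspec_regular {d : nat} : (0 < n)%N -> (forall i, deg e i = d) ->
  \sum_(mu <- lspec e) mu = (n * d)%:R.
Proof.
move=> n_gt0 e_reg; rewrite sum_lspec // mxtrace_laplacian.
by under eq_bigr do rewrite e_reg; rewrite sumr_const card_ord -mulrnA mulnC.
Qed.

End LaplacianSpectrum.

Lemma mulrr_eq_mull_cases {R : idomainType} {x c : R} :
  x * x = c * x -> x = 0 \/ x = c.
Proof.
move=> xx; have : (x - c) * x = 0 by rewrite mulrBl xx subrr.
by move/eqP; rewrite mulf_eq0 subr_eq0 => /orP[] /eqP ->; [right|left].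
Qed.

Section EigenvalueNorms.
Variable R : numFieldType.

Lemma norm_1_sub_eig (m : nat) (j : R) : (0 < m)%N -> j * j = m%:R * j ->
  `|1 - j| = 1 + (m%:R - 2) / m%:R * j.
Proof.
move=> m_gt0 jj; have m0 : m%:R != 0 :> R by rewrite pnatr_eq0 -lt0n.
case: (mulrr_eq_mull_cases jj) => ->; first by rewrite subr0 mulr0 addr0 normr1.
rewrite divfK // distrC ger0_norm ?subr_ge0 ?ler1n //; ring.
Qed.

(* The hypotheses force [(j, b, p)] to be [(0, 0, 1)], [(0, 0, -1)], [(0, N, 1)]
   or [(2N, N, 1)]; on these four points the norm is affine in [j] and [b]. *)
Lemma norm_joint_eig (N : nat) (j b p : R) : (0 < N)%N ->
  j * j = (N + N)%:R * j -> b * b = N%:R * b -> p * p = 1 ->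
  j * b = N%:R * j -> p * j = j -> p * b = b ->
  `|b - j - p| = 1 + j / N%:R + (N%:R - 2) / N%:R * b.
Proof.
move=> N_gt0 jj bb pp jb pj pb.
have N0 : N%:R != 0 :> R by rewrite pnatr_eq0 -lt0n.
have NN0 : (N + N)%:R != 0 :> R by rewrite pnatr_eq0; lia.
have [->|j_eq] := mulrr_eq_mull_cases jj.
  have [->|b_eq] := mulrr_eq_mull_cases bb; last rewrite b_eq in pb *.
    have : (p - 1) * (p + 1) = p * p - 1 by ring.
    rewrite pp subrr => /eqP; rewrite mulf_eq0 subr_eq0 addr_eq0 => /orP[] /eqP ->;
      by rewrite mul0r mulr0 !addr0 subrr sub0r ?opprK ?normrN normr1.
  have -> : p = 1 by apply: (mulIf N0); rewrite pb mul1r.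
  rewrite subr0 mul0r addr0 divfK // ger0_norm ?subr_ge0 ?ler1n //; ring.
have b_eq : b = N%:R by apply: (mulfI NN0); rewrite -j_eq jb mulrC.
have -> : p = 1 by apply: (mulIf NN0); rewrite -j_eq pj mul1r.
rewrite j_eq b_eq divfK // natrD mulrDl divff //.
have -> : N%:R - (N%:R + N%:R) - 1 = - (N%:R + 1) :> R by ring.
rewrite normrN ger0_norm ?addr_ge0 ?ler01 //; ring.
Qed.

End EigenvalueNorms.

Section CompleteGraph.
Variable m : nat.

Lemma simple_complete : simple_graph (complete m).
Proof. by split=> [i|i j]; rewrite /complete ?eqxx // eq_sym. Qed.

Lemma deg_complete i : deg (complete m) i = m.-1.
Proof.
rewrite /deg -[in RHS](card_ord m) -(cardC1 i); apply: eq_card => k.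
by rewrite !inE /complete eq_sym.
Qed.

Lemma laplacian_complete : (0 < m)%N ->
  laplacian (complete m) = m%:R%:M - const_mx 1.
Proof.
move=> m_gt0; apply/matrixP => i j; rewrite !mxE deg_complete /complete.
case: eqP => _ /=; last by rewrite mulr0n.
by rewrite mulr1n subr0 -subn1 natrB.
Qed.

Lemma LE_complete : (0 < m)%N -> LE (complete m) = (2 * m - 2)%:R.
Proof.
move=> m_gt0; pose J : 'M[algC]_m := const_mx 1.
have [V /unitarymx_unit Vu tJ] := Schur J m_gt0.
have JJ : J *m J = m%:R *: J.
  apply/matrixP => i j; rewrite !mxE mulr1.
  by under eq_bigr do rewrite !mxE mulr1; rewrite sumr_const card_ord.
have LV : conjmx V (laplacian (complete m)) = m%:R%:M - conjmx V J.
  by rewrite laplacian_complete // conjmxB conjmx_scalar ?row_free_unit.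
have tL : is_trig_mx (conjmx V (laplacian (complete m))).
  by rewrite LV is_trig_mxD ?is_trig_mxN ?is_trig_scalar_mx.
have avg : avgdeg (complete m) = m%:R - 1.
  by rewrite (avgdeg_regular simple_complete m_gt0 deg_complete) -subn1 natrB.
have diag i : `|conjmx V (laplacian (complete m)) i i - avgdeg (complete m)|
    = 1 + (m%:R - 2) / m%:R * conjmx V J i i.
  rewrite -norm_1_sub_eig //; last by rewrite -conjumxM_diag // JJ conjmxZ mxE.
  by rewrite LV avg !mxE eqxx mulr1n; congr `|_|; ring.
rewrite (LE_trig Vu tL); under eq_bigr do rewrite diag.
rewrite big_split /= -mulr_sumr sumr_const card_ord.
have -> : \sum_i conjmx V J i i = \tr J by exact: mxtrace_conjumx.
rewrite /mxtrace; under eq_bigr do rewrite mxE.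
rewrite sumr_const card_ord divfK ?pnatr_eq0 -?lt0n //.
by rewrite natrB ?natrM; [ring | lia].
Qed.

End CompleteGraph.

Lemma sum_delta_mull {R : pzSemiRingType} {T : finType} (a : T) (F : T -> R) :
  \sum_k (k == a)%:R * F k = F a.
Proof.
rewrite (bigD1 a) //= eqxx mul1r big1 ?addr0 // => k /negbTE ->.
by rewrite mul0r.
Qed.

Lemma sum_delta1 {R : pzSemiRingType} {T : finType} (a : T) :
  \sum_k (k == a)%:R = 1 :> R.
Proof.
by rewrite -[RHS](sum_delta_mull a (fun=> 1)); apply: eq_bigr => k _; rewrite mulr1.
Qed.

Definition partner (k : nat) : nat := (~~ odd k + k./2.*2)%N.

Lemma half_partner k : (partner k)./2 = k./2.
Proof. exact: half_bit_double. Qed.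

Lemma odd_partner k : odd (partner k) = ~~ odd k.
Proof. by rewrite /partner oddD odd_double addbF oddb. Qed.

Lemma partnerK : involutive partner.
Proof.
by move=> k; rewrite [in LHS]/partner odd_partner negbK half_partner odd_double_half.
Qed.

Lemma partner_neq k : partner k != k.
Proof. by apply/negP => /eqP/(congr1 odd); rewrite odd_partner; case: (odd k). Qed.

Lemma eq_partner j k : (j == partner k) = (j != k) && (j./2 == k./2).
Proof.
apply/eqP/andP => [->|[neq_jk /eqP half_jk]].
  by rewrite partner_neq half_partner.
have odd_jk : odd j != odd k.
  apply: contraNneq neq_jk => odd_jk.
  by rewrite -[j]odd_double_half -[k]odd_double_half odd_jk half_jk.
rewrite /partner -half_jk -[LHS]odd_double_half.
by case: (odd j) (odd k) odd_jk => [] [].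
Qed.

Lemma ltn_partner_double k l : (partner k < l.*2)%N = (k < l.*2)%N.
Proof. by rewrite -!ltn_half_double half_partner. Qed.

Lemma partnerDl k l : partner (2 * l + k) = (2 * l + partner k)%N.
Proof.
by rewrite /partner mul2n oddD halfD odd_double doubleK /= add0n doubleD addnCA.
Qed.

Lemma mK2E k (a b : 'I_(2 * k)) : mK2 k a b = (val b == partner a).
Proof. by rewrite /mK2 eq_partner eq_sym [_./2 == _]eq_sym. Qed.

Section JoinOfMatchings.
Variable m : nat.
Local Notation n := (2 * m + 2 * m)%N.
Local Notation G := (gjoin (mK2 m) (mK2 m)).
Implicit Types i j k : 'I_n.

Definition in_left i : bool := (i < 2 * m)%N.

Lemma ltn_partner_ord i : (partner i < n)%N.
Proof. by move: (nat_of_ord i) (ltn_ord i) => k; rewrite addnn ltn_partner_double. Qed.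

Definition mate i : 'I_n := Ordinal (ltn_partner_ord i).

Lemma mateK : involutive mate.
Proof. by move=> i; apply: val_inj; rewrite /= partnerK. Qed.

Lemma mate_neq i : mate i != i.
Proof. exact: partner_neq. Qed.

Lemma in_left_mate i : in_left (mate i) = in_left i.
Proof. by rewrite /in_left /=; move: (nat_of_ord i) => k; rewrite mul2n ltn_partner_double. Qed.

Lemma join_mK2E i j : G i j = (in_left i != in_left j) || (j == mate i).
Proof.
rewrite /gjoin /in_left -val_eqE /=.
case: splitP => a ->; case: splitP => b -> /=; rewrite ?mK2E ?ltn_ord ?ltnNge ?leq_addr //=.
by rewrite partnerDl eqn_add2l.
Qed.

Lemma simple_join_mK2 : simple_graph G.
Proof.
split=> [i|i j]; rewrite !join_mK2E; first by rewrite eqxx eq_sym mate_neq.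
by rewrite [j == _]eq_sym (can2_eq mateK mateK) [in_left j == _]eq_sym.
Qed.

Lemma sum_same_side b : \sum_k (in_left k == b)%:R = (2 * m)%:R :> algC.
Proof.
rewrite big_split_ord /=.
have inl (a : 'I_(2 * m)) : in_left (lshift _ a) by rewrite /in_left /= ltn_ord.
have inr (a : 'I_(2 * m)) : in_left (rshift _ a) = false by rewrite /in_left /= ltnNge leq_addr.
under eq_bigr do rewrite inl; under [X in _ + X]eq_bigr do rewrite inr.
by case: b; rewrite /= !sumr_const card_ord mul0rn ?(addr0, add0r).
Qed.

Lemma join_mK2_natr i j :
  (G i j)%:R = 1 - (in_left i == in_left j)%:R + (j == mate i)%:R :> algC.
Proof.
rewrite join_mK2E; case: (boolP (j == mate i)) => [/eqP ->|_].
  by rewrite in_left_mate eqxx subrr add0r.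
by case: (in_left i == in_left j); rewrite ?subrr ?subr0 addr0.
Qed.

Lemma deg_join_mK2 i : deg G i = (2 * m).+1.
Proof.
apply/eqP; rewrite -(eqr_nat algC) /deg -sum1_card natr_sum big_mkcond /=.
have natr_if k : (if k \in [pred k | G i k] then 1 else 0 : algC) = (G i k)%:R.
  by rewrite inE; case: (G i k).
under eq_bigr => k _ do rewrite natr_if join_mK2_natr.
rewrite !big_split /= sumrN sumr_const card_ord.
under [X in _ - X]eq_bigr do rewrite eq_sym.
by rewrite sum_same_side sum_delta1 natrD addrK natr1.
Qed.

Definition ones : 'M[algC]_n := const_mx 1.
Definition same_side : 'M[algC]_n := \matrix_(i, j) (in_left i == in_left j)%:R.
Definition mate_mx : 'M[algC]_n := \matrix_(i, j) (j == mate i)%:R.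

Lemma laplacian_join_mK2 :
  laplacian G = (2 * m).+1%:R%:M - (ones - same_side + mate_mx).
Proof.
apply/matrixP => i j; rewrite !mxE deg_join_mK2 join_mK2_natr.
by case: (i == j); rewrite ?mulr1n ?mulr0n.
Qed.

Lemma mate_mxM X i j : (mate_mx *m X) i j = X (mate i) j.
Proof.
rewrite mxE -[RHS](sum_delta_mull (mate i) (X^~ j)).
by apply: eq_bigr => k _; rewrite mxE.
Qed.

Lemma mulmx_mate X i j : (X *m mate_mx) i j = X i (mate j).
Proof.
rewrite mxE -[RHS](sum_delta_mull (mate j) (X i)).
apply: eq_bigr => k _; rewrite mxE mulrC.
by rewrite eq_sym (can2_eq mateK mateK).
Qed.

Lemma mate_mx2 : mate_mx *m mate_mx = 1%:M.
Proof. by apply/matrixP => i j; rewrite mate_mxM !mxE mateK eq_sym. Qed.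

Lemma mate_mx_ones : mate_mx *m ones = ones.
Proof. by apply/matrixP => i j; rewrite mate_mxM !mxE. Qed.

Lemma ones_mate_mx : ones *m mate_mx = ones.
Proof. by apply/matrixP => i j; rewrite mulmx_mate !mxE. Qed.

Lemma mate_mx_same_side : mate_mx *m same_side = same_side.
Proof. by apply/matrixP => i j; rewrite mate_mxM !mxE in_left_mate. Qed.

Lemma same_side_mate_mx : same_side *m mate_mx = same_side.
Proof. by apply/matrixP => i j; rewrite mulmx_mate !mxE in_left_mate. Qed.

Lemma mxtrace_ones : \tr ones = n%:R.
Proof. by rewrite /mxtrace; under eq_bigr do rewrite mxE; rewrite sumr_const card_ord. Qed.

Lemma mxtrace_same_side : \tr same_side = n%:R.
Proof. by rewrite /mxtrace; under eq_bigr do rewrite mxE eqxx; rewrite sumr_const card_ord. Qed.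

Lemma ones2 : ones *m ones = n%:R *: ones.
Proof.
apply/matrixP => i j; rewrite !mxE mulr1.
by under eq_bigr do rewrite !mxE mulr1; rewrite sumr_const card_ord.
Qed.

Lemma ones_same_side : ones *m same_side = (2 * m)%:R *: ones.
Proof.
apply/matrixP => i j; rewrite !mxE mulr1 -(sum_same_side (in_left j)).
by apply: eq_bigr => k _; rewrite !mxE mul1r.
Qed.

Lemma same_side_ones : same_side *m ones = (2 * m)%:R *: ones.
Proof.
apply/matrixP => i j; rewrite !mxE mulr1 -(sum_same_side (in_left i)).
by apply: eq_bigr => k _; rewrite !mxE mulr1 eq_sym.
Qed.

Lemma same_side2 : same_side *m same_side = (2 * m)%:R *: same_side.
Proof.
apply/matrixP => i j; rewrite !mxE -(sum_same_side (in_left i)) mulr_suml.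
apply: eq_bigr => k _; rewrite !mxE.
by case: (in_left i) (in_left j) (in_left k) => [] [] [];
  rewrite /= ?(mulr1, mulr0, mul1r, mul0r).
Qed.

Lemma cotrig_join_mK2 : exists2 V : 'M[algC]_n, V \in unitmx &
  [/\ is_trig_mx (conjmx V ones), is_trig_mx (conjmx V same_side)
    & is_trig_mx (conjmx V mate_mx)].
Proof.
have [|V /unitarymx_unit Vu /and4P[tP tJ tB _]] :=
  @cotrigonalization _ n [:: mate_mx; ones; same_side].
  move=> A B; rewrite !inE => /or3P[] /eqP -> /or3P[] /eqP ->;
  by rewrite /comm_mx ?mate_mx_ones ?ones_mate_mx ?mate_mx_same_side
     ?same_side_mate_mx ?ones_same_side ?same_side_ones.
by exists V.
Qed.

Lemma LE_join_mK2 : (0 < m)%N -> LE G = (8 * m - 2)%:R.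
Proof.
move=> m_gt0; have [V Vu [tJ tB tP]] := cotrig_join_mK2.
pose N := (2 * m)%N.
have LV : conjmx V (laplacian G) =
    N.+1%:R%:M - (conjmx V ones - conjmx V same_side + conjmx V mate_mx).
  by rewrite laplacian_join_mK2 conjmxB conjmx_scalar ?row_free_unit // conjmxD conjmxB.
have tL : is_trig_mx (conjmx V (laplacian G)).
  by rewrite LV is_trig_mxD ?is_trig_mxN ?is_trig_mxD ?is_trig_mxN ?is_trig_scalar_mx.
have avg : avgdeg G = N.+1%:R.
  by rewrite (avgdeg_regular simple_join_mK2 _ deg_join_mK2) //; lia.
have diag i : `|conjmx V (laplacian G) i i - avgdeg G|
    = 1 + conjmx V ones i i / N%:R + (N%:R - 2) / N%:R * conjmx V same_side i i.
  rewrite -(@norm_joint_eig _ N _ _ (conjmx V mate_mx i i)); first last.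
  - by rewrite -conjumxM_diag // mate_mx_same_side.
  - by rewrite -conjumxM_diag // mate_mx_ones.
  - by rewrite -conjumxM_diag // ones_same_side conjmxZ mxE.
  - by rewrite -conjumxM_diag // mate_mx2 conjmx_scalar ?row_free_unit // mxE eqxx.
  - by rewrite -conjumxM_diag // same_side2 conjmxZ mxE.
  - by rewrite -conjumxM_diag // ones2 conjmxZ mxE.
  - by rewrite /N; lia.
  by rewrite LV avg !mxE eqxx mulr1n; congr `|_|; ring.
rewrite (LE_trig Vu tL); under eq_bigr do rewrite diag.
rewrite !big_split /= -mulr_suml -mulr_sumr sumr_const card_ord.
have tr_diag A : \sum_i conjmx V A i i = \tr A by exact: mxtrace_conjumx.
rewrite !tr_diag mxtrace_ones mxtrace_same_side natrB; last lia.
rewrite /N natrD !natrM; field.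
by rewrite pnatr_eq0 -lt0n.
Qed.
End JoinOfMatchings.

Theorem theorem3 (r : nat) (hr : (1 <= r)%N) :
  (2 * r.+1 + 2 * r.+1 = 4 * r + 4)%N /\
  simple_graph (Gr r) /\
  LE (Gr r) = LE (complete (2 * r.+1 + 2 * r.+1)%N) /\
  LE (Gr r) = (8 * r + 6)%:R /\
  ~~ perm_eq (lspec (Gr r)) (lspec (complete (2 * r.+1 + 2 * r.+1)%N)).
Proof.
have n_gt0 : (0 < 2 * r.+1 + 2 * r.+1)%N by [].
have LE_G : LE (Gr r) = (8 * r + 6)%:R.
  by rewrite [LHS]LE_join_mK2 //; congr _%:R; lia.
have LE_K : LE (complete (2 * r.+1 + 2 * r.+1)) = (8 * r + 6)%:R.
  by rewrite LE_complete //; congr _%:R; lia.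
split; first lia.
split; first exact: simple_join_mK2.
split; first by rewrite LE_G LE_K.
split; first exact: LE_G.
apply/negP => same_spec.
have : \sum_(mu <- lspec (Gr r)) mu = \sum_(mu <- lspec (complete (2 * r.+1 + 2 * r.+1))) mu.
  by apply: perm_big.
rewrite (sum_lspec_regular (simple_join_mK2 _) n_gt0 (deg_join_mK2 _)).
rewrite (sum_lspec_regular (simple_complete _) n_gt0 (deg_complete _)).
by move/eqP; rewrite eqr_nat => /eqP; lia.
Qed.
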